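(* Suppose an ordered linear probing hash table with $n$ slots initially contains $(1-\epsilon)n$ keys (inserted into an empty table, with fully random hashes) and no tombstones. Let $c$ be a sufficiently large constant. Then for any interval $P\subseteq[n]$ with $|P|\ge c\,\epsilon^{-2}\log\epsilon^{-1}$, with probability $1-1/\mathrm{poly}(|P|)$ the interval $P$ contains $\Omega(\epsilon|P|)$ free slots.
   Context: Ordered linear probing: slots $1,\dots,n$; an inserted key $u$ is placed in the run starting at or covering $h(u)$ so that keys in each maximal run of occupied slots are stored in order of hash, shifting later keys right to the first free slot. $h$ is uniform and fully independent. ''With probability $1-1/\mathrm{poly}(j)$'' means for every constant $c'>0$, probability $1-O(j^{-c'})$. *)

From HB Require Import structures.
From mathcomp Require Import all_boot all_order all_algebra.
From mathcomp Require Import reals exp.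
Set Implicit Arguments. Unset Strict Implicit. Unset Printing Implicit Defensive.
Import Order.TTheory GRing.Theory Num.Theory.

(* Ordered linear probing, circular table with slots 0..n-1 (paper's 1..n),
   keys are the naturals 0..m-1, h k < n is the hash of key k.
   A table is a seq of length n of [option key] ([None] = free slot). *)

Section OLP.
Variables (n : nat) (h : nat -> nat).

Definition slot_at (tab : seq (option nat)) (i : nat) : option nat :=
  nth None tab (i %% n).

(* offset (0 <= k < n) of the first free slot at or after i; n if none *)
Definition off_free (tab : seq (option nat)) (i : nat) : nat :=
  find (fun k => slot_at tab (i + k) == None) (iota 0 n).

Definition off_back (tab : seq (option nat)) (i : nat) : nat :=
  find (fun k => slot_at tab (i + n - k.+1) == None) (iota 0 n).

(* Insert key u: the keys of the run starting at or covering h u, together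
   with u, are laid out in order of hash (relative to the run start s),
   occupying the run and the first free slot after it (i.e. later keys are
   shifted right to the first free slot). *)
Definition olp_insert (tab : seq (option nat)) (u : nat) : seq (option nat) :=
  let hu := h u in
  let f := off_free tab hu in
  if n <= f then tab else
  let b := if slot_at tab hu == None then 0 else off_back tab hu in
  let s := (hu + n - b) %% n in
  let L := b + f in (* number of keys already in the run segment [s, s+L) *)
  let old := pmap id [seq slot_at tab (s + j) | j <- iota 0 L] in
  let dist k := (h k + n - s) %% n in
  let sorted_keys := sort (fun x y => dist x <= dist y) (old ++ [:: u]) in
  mkseq (fun i => let j := (i + n - s) %% n in
                  if j <= L then Some (nth 0 sorted_keys j) else nth None tab i) n.

Definition olp_build (m : nat) : seq (option nat) :=
  foldl olp_insert (nseq n None) (iota 0 m).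

Definition free_in (tab : seq (option nat)) (a len : nat) : nat :=
  count (fun i => nth None tab i == None) (iota a len).

End OLP.

Definition hashfun (n m : nat) (f : {ffun 'I_m -> 'I_n}) (k : nat) : nat :=
  if insub k is Some i then val (f i) else 0.

(* Probability of an event over uniform, fully independent hashes. *)
Definition prob_hash (R : realType) (n m : nat)
  (E : (nat -> nat) -> bool) : R :=
  (#|[set f : {ffun 'I_m -> 'I_n} | E (hashfun f)]|%:R / (n ^ m)%:R)%R.

From HB Require Import structures.
From mathcomp Require Import all_boot all_order all_algebra.
From mathcomp Require Import reals exp.
From mathcomp Require Import zify sequences ring lra.
Import Order.TTheory GRing.Theory Num.Theory.

Set Implicit Arguments. Unset Strict Implicit. Unset Printing Implicit Defensive.

(* Ordered linear probing never moves a key backwards past a free slot, so a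
   cyclic interval preceded by a free slot holds at most as many keys as hash
   into it.  If P = [a, a + L) has fewer than eps L / 2 free slots, extend it
   backwards over the run of length j that ends just before a: the interval
   [a - j, a + L) is preceded by a free slot, hence receives at least
   (1 - eps / 2)(j + L) of the keys, whereas (1 - eps)(j + L) are expected.
   A Chernoff bound makes this happen with probability exp(-eps^2 (j + L) / 32)
   for each j; summing the geometric series over j gives
   O(eps^-2 exp(-eps^2 L / 32)), which is O(L^-c') once L >= c eps^-2 ln(1/eps). *)

Section OrderedLinearProbing.
Variables (n : nat) (h : nat -> nat).
Hypothesis n_gt0 : (0 < n)%N.

Lemma mod_offsetK s i : (s < n)%N -> (i < n)%N -> (s + (i + n - s) %% n) %% n = i.
Proof.
move=> lt_s lt_i; rewrite modnDmr.
have -> : (s + (i + n - s) = i + n)%N by lia.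
by rewrite modnDr modn_small.
Qed.

Lemma mod_offset_inj s j k : (j < n)%N -> (k < n)%N ->
  (s + j) %% n = (s + k) %% n -> j = k.
Proof. by move=> lt_j lt_k /eqP; rewrite eqn_modDl !modn_small // => /eqP. Qed.

Lemma slot_at_mod tab i : slot_at n tab (i %% n) = slot_at n tab i.
Proof. by rewrite /slot_at modn_mod. Qed.

Lemma slot_at_small tab i : (i < n)%N -> slot_at n tab i = nth None tab i.
Proof. by move=> lt_i; rewrite /slot_at modn_small. Qed.

Definition has_free_slot tab := exists2 i, (i < n)%N & slot_at n tab i == None.

Lemma off_free_lt tab i : has_free_slot tab -> (off_free n tab i < n)%N.
Proof.
case=> k lt_k free_k; rewrite /off_free -[X in (_ < X)%N](size_iota 0 n) -has_find.
apply/hasP; exists ((k + n - i %% n) %% n); first by rewrite mem_iota ltn_mod n_gt0.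
by rewrite -slot_at_mod -modnDml mod_offsetK ?ltn_mod.
Qed.

Lemma off_free_free tab i : (off_free n tab i < n)%N ->
  slot_at n tab (i + off_free n tab i) == None.
Proof.
move=> lt_f; have := nth_find 0 (a := fun k => slot_at n tab (i + k) == None) (s := iota 0 n).
by rewrite has_find size_iota => /(_ lt_f); rewrite nth_iota.
Qed.

Lemma off_free_before tab i k : (k < off_free n tab i)%N ->
  slot_at n tab (i + k) != None.
Proof.
move=> lt_k; have le_f : (off_free n tab i <= n)%N.
  by have := find_size (fun k => slot_at n tab (i + k) == None) (iota 0 n); rewrite size_iota.
by have := before_find 0 lt_k; rewrite nth_iota ?add0n // => [->|]; last lia.
Qed.

Lemma off_back_le tab i : (off_back n tab i <= n)%N.
Proof.
have := find_size (fun k => slot_at n tab (i + n - k.+1) == None) (iota 0 n).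
by rewrite size_iota.
Qed.

Lemma off_back_free tab i : (off_back n tab i < n)%N ->
  slot_at n tab (i + n - (off_back n tab i).+1) == None.
Proof.
move=> lt_b; have := nth_find 0 (a := fun k => slot_at n tab (i + n - k.+1) == None) (s := iota 0 n).
by rewrite has_find size_iota => /(_ lt_b); rewrite nth_iota.
Qed.

Lemma off_back_before tab i k : (k < off_back n tab i)%N ->
  slot_at n tab (i + n - k.+1) != None.
Proof.
move=> lt_k; have le_b := off_back_le tab i.
by have := before_find 0 lt_k; rewrite nth_iota ?add0n // => [->|]; last lia.
Qed.

Definition run_back tab i := if slot_at n tab i == None then 0 else off_back n tab i.

Lemma run_back_le tab i : (run_back tab i <= n)%N.
Proof. by rewrite /run_back; case: ifP => // _; apply: off_back_le. Qed.

Lemma run_back_before tab i k : (k < run_back tab i)%N ->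
  slot_at n tab (i + n - k.+1) != None.
Proof. by rewrite /run_back; case: ifP => // _; apply: off_back_before. Qed.

Lemma run_lt tab i : (off_free n tab i < n)%N ->
  (run_back tab i + off_free n tab i < n)%N.
Proof.
move=> lt_f; rewrite ltnNge; apply/negP => le_n.
have := @run_back_before tab i (n - off_free n tab i).-1; rewrite prednK ?subn_gt0 //.
have -> : (i + n - (n - off_free n tab i) = i + off_free n tab i)%N by lia.
by rewrite (off_free_free lt_f) => /(_ ltac:(lia)).
Qed.

Lemma run_occupied tab i j : (j < run_back tab i + off_free n tab i)%N ->
  slot_at n tab (i + n - run_back tab i + j) != None.
Proof.
move=> lt_j; have le_b := run_back_le tab i.
case: (ltnP j (run_back tab i)) => [lt_jb|le_bj].
  have := @run_back_before tab i (run_back tab i - j.+1) ltac:(lia).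
  by have -> : (i + n - (run_back tab i - j.+1).+1 = i + n - run_back tab i + j)%N by lia.
have -> : (i + n - run_back tab i + j = i + (j - run_back tab i) + n)%N by lia.
by rewrite -slot_at_mod modnDr slot_at_mod; apply: off_free_before; lia.
Qed.

Lemma nth_olp_insert_occupied tab u i : (h u < n)%N -> has_free_slot tab -> (i < n)%N ->
  (nth None (olp_insert n h tab u) i != None) =
  (nth None tab i != None) || (i == (h u + off_free n tab (h u)) %% n).
Proof.
move=> lt_hu free_tab lt_i.
have lt_f := off_free_lt (h u) free_tab.
have lt_bf := run_lt lt_f; have le_b := run_back_le tab (h u).
rewrite /olp_insert leqNgt lt_f /= -/(run_back tab (h u)) nth_mkseq //=.
set f := off_free n tab (h u) in lt_f lt_bf *; set b := run_back tab (h u) in lt_bf le_b *.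
set j := ((i + n - (h u + n - b) %% n) %% n)%N.
have lt_j : (j < n)%N by rewrite ltn_mod.
have Ei : (h u + n - b + j) %% n = i by rewrite -modnDml mod_offsetK // ltn_mod.
have Eq : (h u + n - b + (b + f)) %% n = (h u + f) %% n.
  have -> : (h u + n - b + (b + f) = h u + f + n)%N by lia.
  by rewrite modnDr.
case: (ltngtP j (b + f)) => [lt_jbf|gt_jbf|Ej]; last by rewrite -Ei Ej Eq eqxx orbT.
  by rewrite -slot_at_small // -Ei slot_at_mod (run_occupied lt_jbf).
have [Eqi|_] := eqVneq i ((h u + f) %% n); last by rewrite orbF.
by rewrite -Ei -Eq in Eqi; have := mod_offset_inj lt_j lt_bf Eqi; lia.
Qed.

Lemma slot_olp_insert_occupied tab u i : (h u < n)%N -> has_free_slot tab ->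
  (slot_at n (olp_insert n h tab u) i != None) =
  (slot_at n tab i != None) || (i %% n == (h u + off_free n tab (h u)) %% n).
Proof. by move=> lt_hu free_tab; rewrite /slot_at nth_olp_insert_occupied // ltn_mod. Qed.

Lemma count_offset_eq q l s : (q < n)%N -> (l <= n)%N -> (s < n)%N ->
  count (fun k => (s + k) %% n == q) (iota 0 l) = ((q + n - s) %% n < l)%N.
Proof.
move=> lt_q le_l lt_s.
have -> : ((q + n - s) %% n < l)%N = ((q + n - s) %% n \in iota 0 l).
  by rewrite mem_iota add0n.
rewrite -(count_uniq_mem _ (iota_uniq 0 l)).
apply: eq_in_count => k; rewrite mem_iota add0n /= => lt_k.
apply/eqP/eqP => [<-|->]; last by rewrite mod_offsetK.
by apply: (@mod_offset_inj s); rewrite ?ltn_mod ?mod_offsetK ?modn_mod //; lia.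
Qed.

Definition occupied tab := count (fun i => slot_at n tab i != None) (iota 0 n).

Lemma has_free_slot_lt tab : (occupied tab < n)%N -> has_free_slot tab.
Proof.
move=> lt_occ; have : ~~ all (fun i => slot_at n tab i != None) (iota 0 n).
  by rewrite all_count size_iota neq_ltn lt_occ.
by case/allPn => i; rewrite mem_iota add0n negbK; exists i.
Qed.

Lemma occupied_olp_insert tab u : (h u < n)%N -> has_free_slot tab ->
  occupied (olp_insert n h tab u) = (occupied tab).+1.
Proof.
move=> lt_hu free_tab; rewrite /occupied.
set q := ((h u + off_free n tab (h u)) %% n)%N.
under eq_count => i do rewrite slot_olp_insert_occupied // -/q.
have lt_q : (q < n)%N by rewrite ltn_mod.
have free_q : slot_at n tab q == None.
  by rewrite slot_at_mod off_free_free // off_free_lt.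
have := count_predUI (fun i => slot_at n tab i != None) (fun i => i %% n == q) (iota 0 n).
have -> : count (predI (fun i => slot_at n tab i != None) (fun i => i %% n == q)) (iota 0 n) = 0%N.
  apply/eqP; rewrite -leqn0 leqNgt -has_count; apply/hasPn => i _ /=.
  by apply/negP => /andP[+ /eqP Ei]; rewrite -slot_at_mod Ei free_q.
have := count_offset_eq lt_q (leqnn n) n_gt0.
rewrite subn0 modnDr modn_small // lt_q => E.
rewrite (eq_count (a1 := fun i => i %% n == q) (a2 := fun k => (0 + k) %% n == q)) // E.
by rewrite addn0 addn1.
Qed.

Lemma olp_buildS M : olp_build n h M.+1 = olp_insert n h (olp_build n h M) M.
Proof. by rewrite /olp_build -addn1 iotaD foldl_cat. Qed.

Lemma occupied_olp_build M : (M <= n)%N -> (forall k, (k < M)%N -> (h k < n)%N) ->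
  occupied (olp_build n h M) = M.
Proof.
elim: M => [_ _|M IH le_Mn lt_h].
  rewrite /occupied /olp_build /=.
  apply/eqP; rewrite -leqn0 leqNgt -has_count; apply/hasPn => i _.
  by rewrite /slot_at nth_nseq if_same eqxx.
have occ := IH (ltnW le_Mn) (fun k lt_k => lt_h k (ltnW lt_k)).
have free_tab : has_free_slot (olp_build n h M) by apply: has_free_slot_lt; rewrite occ.
by rewrite olp_buildS occupied_olp_insert ?occ ?lt_h.
Qed.

Definition occupied_count tab s l :=
  count (fun k => slot_at n tab (s + k) != None) (iota 0 l).

Definition hash_count s l M := count (fun k => ((h k + n - s) %% n < l)%N) (iota 0 M).

Definition hash_dominated tab M := forall s l, (s < n)%N -> (l <= n)%N ->
  slot_at n tab (s + n - 1) == None -> (occupied_count tab s l <= hash_count s l M)%N.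

Lemma offset_off_free_ge tab i s : (i < n)%N -> (s < n)%N ->
  (off_free n tab i < n)%N -> slot_at n tab (s + n - 1) == None ->
  ((i + n - s) %% n <= ((i + off_free n tab i) %% n + n - s) %% n)%N.
Proof.
move=> lt_i lt_s lt_f free_prev.
set di := ((i + n - s) %% n)%N; set dq := (_ %% n)%N.
have lt_di : (di < n)%N by rewrite ltn_mod.
have lt_dq : (dq < n)%N by rewrite ltn_mod.
have Ei : (s + di) %% n = i by rewrite mod_offsetK.
have Eq : (s + dq) %% n = (s + (di + off_free n tab i)) %% n.
  by rewrite mod_offsetK ?ltn_mod // addnA -[in RHS]modnDml Ei.
clearbody di dq.
case: (ltnP (di + off_free n tab i) n) => [lt_dif|le_ndif].
  by rewrite (mod_offset_inj lt_dq lt_dif Eq) leq_addr.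
have := @off_free_before tab i (n - di.+1) ltac:(lia).
rewrite -slot_at_mod -Ei modnDml slot_at_mod.
have -> : (s + di + (n - di.+1) = s + n - 1)%N by lia.
by rewrite (eqP free_prev).
Qed.

(* The new key lands on the first free slot after its hash, so if that slot
   lies in [s, s + l) then so does the hash (offset_off_free_ge). *)
Lemma hash_dominated_insert tab M : (h M < n)%N -> has_free_slot tab ->
  hash_dominated tab M -> hash_dominated (olp_insert n h tab M) M.+1.
Proof.
move=> lt_hM free_tab dom s l lt_s le_l free_prev.
have free_prev' : slot_at n tab (s + n - 1) == None.
  apply/negPn; move: free_prev; apply: contraL => occ.
  by rewrite slot_olp_insert_occupied // occ.
have old := dom s l lt_s le_l free_prev'.
have mono := offset_off_free_ge lt_hM lt_s (off_free_lt _ free_tab) free_prev'.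
set q := ((h M + off_free n tab (h M)) %% n)%N in mono.
rewrite /occupied_count /hash_count -addn1 iotaD count_cat /= add0n addn0.
under eq_count => k do rewrite slot_olp_insert_occupied // -/q.
have U := count_predUI (fun k => slot_at n tab (s + k) != None)
  (fun k => (s + k) %% n == q) (iota 0 l).
rewrite count_offset_eq ?ltn_mod // in U.
apply: (@leq_trans (occupied_count tab s l + ((q + n - s) %% n < l))).
  by rewrite /occupied_count -U leq_addr.
apply: leq_add old _.
by case: (ltnP ((q + n - s) %% n) l) => // /(leq_ltn_trans mono) ->.
Qed.

Lemma hash_dominated_olp_build M : (M <= n)%N ->
  (forall k, (k < M)%N -> (h k < n)%N) -> hash_dominated (olp_build n h M) M.
Proof.
elim: M => [_ _ s l _ _ _|M IH le_Mn lt_h].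
  rewrite /hash_count /= leqn0 /occupied_count eqn0Ngt -has_count.
  apply/hasPn => i _.
  by rewrite /slot_at nth_nseq if_same eqxx.
have lt_h' k : (k < M)%N -> (h k < n)%N by move=> lt_k; apply: lt_h; apply: ltnW.
have free_tab : has_free_slot (olp_build n h M).
  by apply: has_free_slot_lt; rewrite occupied_olp_build // ltnW.
rewrite olp_buildS; apply: hash_dominated_insert => //; first exact: lt_h.
exact: IH (ltnW le_Mn) lt_h'.
Qed.

Lemma off_back_lt tab a : has_free_slot tab -> (off_back n tab a < n)%N.
Proof.
case=> i lt_i free_i; rewrite ltn_neqAle off_back_le andbT; apply/eqP => E.
set k := ((a + n - i.+1) %% n)%N.
have := @off_back_before tab a k; rewrite E ltn_mod n_gt0 => /(_ isT).
rewrite -slot_at_mod.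
have -> : (a + n - k.+1) %% n = i.
  have lt_k : (k < n)%N by rewrite ltn_mod.
  have := divn_eq (a + n - i.+1) n; rewrite -/k.
  set d := (_ %/ n)%N; clearbody d k => Em.
  have -> : (a + n - k.+1 = d * n + i)%N by lia.
  by rewrite modnMDl modn_small.
by rewrite (eqP free_i).
Qed.

Lemma slot_before_run_free tab a : (off_back n tab a < n)%N ->
  slot_at n tab ((a + n - off_back n tab a) %% n + n - 1) == None.
Proof.
move=> lt_b; rewrite -slot_at_mod -addnBA // modnDml.
have -> : (a + n - off_back n tab a + (n - 1) = a + n - (off_back n tab a).+1 + n)%N.
  by clear -lt_b n_gt0; lia.
by rewrite modnDr slot_at_mod off_back_free.
Qed.

Lemma run_extension_count tab a L l : (a + L <= n)%N ->
  (off_back n tab a <= l)%N -> (l - off_back n tab a <= L)%N ->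
  (l <= occupied_count tab ((a + n - off_back n tab a) %% n) l + free_in tab a L)%N.
Proof.
move=> le_aL le_jl le_lL; have le_jn := off_back_le tab a.
set j := off_back n tab a in le_jl le_lL le_jn *.
rewrite /occupied_count -(subnKC le_jl) iotaD count_cat.
have -> : count (fun k => slot_at n tab ((a + n - j) %% n + k) != None) (iota 0 j) = j.
  apply/eqP; rewrite -[X in _ == X](size_iota 0 j) -all_count; apply/allP => k.
  rewrite mem_iota add0n => lt_kj.
  rewrite -slot_at_mod modnDml slot_at_mod.
  have -> : (a + n - j + k = a + n - (j - k.+1).+1)%N by lia.
  by apply: off_back_before; lia.
rewrite add0n -[X in iota X]addn0 iotaDl count_map.
have -> : count (preim (addn j) (fun k => slot_at n tab ((a + n - j) %% n + k) != None))
    (iota 0 (l - j)) = count (fun i => nth None tab i != None) (iota a (l - j)).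
  rewrite -[in RHS](addn0 a) iotaDl count_map; apply: eq_in_count => k.
  rewrite mem_iota add0n /= => lt_k.
  rewrite -slot_at_small; last by lia.
  rewrite -slot_at_mod modnDml.
  have -> : (a + n - j + (j + k) = a + k + n)%N by lia.
  by rewrite modnDr slot_at_mod.
rewrite /free_in -(subnKC le_lL) iotaD count_cat -addnA leq_add2l addnA.
rewrite -[X in (X <= _)%N](size_iota a (l - j)) -(count_predC (fun i => nth None tab i != None)).
rewrite (eq_count (a1 := predC (fun i => nth None tab i != None))
  (a2 := fun i => nth None tab i == None)); last by move=> i /=; rewrite negbK.
by rewrite -addnA leq_add2l leq_addr.
Qed.

Lemma hash_count_full s M : hash_count s n M = M.
Proof.
rewrite /hash_count (eq_count (a2 := predT)) ?count_predT ?size_iota //.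
by move=> k; rewrite /= ltn_mod n_gt0.
Qed.

(* The witness [j] is the length of the run ending just before [a], so that the
   cyclic interval of length [j + L] starting at [a - j] follows a free slot. *)
Lemma olp_run_bound tab M a L : occupied tab = M -> hash_dominated tab M ->
  (M < n)%N -> (a + L <= n)%N ->
  exists2 j, (j < n)%N & (minn (j + L) n <=
    hash_count ((a + n - j) %% n) (minn (j + L) n) M + free_in tab a L)%N.
Proof.
move=> occ dom lt_Mn le_aL.
have lt_j : (off_back n tab a < n)%N by apply/off_back_lt/has_free_slot_lt; rewrite occ.
exists (off_back n tab a) => //.
have le_jl : (off_back n tab a <= minn (off_back n tab a + L) n)%N.
  by rewrite leq_min (ltnW lt_j) leq_addr.
have le_lL : (minn (off_back n tab a + L) n - off_back n tab a <= L)%N.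
  by rewrite leq_subLR geq_minl.
apply: leq_trans (run_extension_count le_aL le_jl le_lL) _.
by rewrite leq_add2r dom ?ltn_mod ?geq_minr ?slot_before_run_free.
Qed.

End OrderedLinearProbing.

Lemma card_le_sum_cover (T I : finType) (A : {set T}) (B : I -> {set T}) :
  (forall x, x \in A -> exists i, x \in B i) -> (#|A| <= \sum_i #|B i|)%N.
Proof.
move=> cover; rewrite -sum1_card.
apply: (@leq_trans (\sum_(x in A) \sum_i (x \in B i))).
  apply: leq_sum => x /cover[i xBi].
  by rewrite (bigD1 i) //= xBi.
rewrite (@leq_trans (\sum_x \sum_i (x \in B i))) //.
  by rewrite [X in (_ <= X)%N](bigID [in A]) leq_addr.
rewrite exchange_big; apply: leq_sum => i _.
by rewrite -sum1_card [X in (_ <= X)%N]big_mkcond; apply/eq_leq/eq_bigr => x _; case: (x \in B i).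
Qed.

Definition hit_count (n m : nat) (f : {ffun 'I_m -> 'I_n}) (S : {set 'I_n}) : nat :=
  \sum_(i < m) (f i \in S).

Section HashFunctions.
Variables (n m : nat).
Hypothesis n_gt0 : (0 < n)%N.

Lemma hashfun_lt (f : {ffun 'I_m -> 'I_n}) k : (hashfun f k < n)%N.
Proof. by rewrite /hashfun; case: insub => // i; exact: ltn_ord. Qed.

Lemma hashfun_ord (f : {ffun 'I_m -> 'I_n}) (i : 'I_m) : hashfun f i = f i.
Proof. by rewrite /hashfun valK. Qed.

Definition cyclic_interval s l : {set 'I_n} := [set y : 'I_n | ((y + n - s) %% n < l)%N].

Lemma hash_count_hashfun (f : {ffun 'I_m -> 'I_n}) s l :
  hash_count n (hashfun f) s l m = hit_count f (cyclic_interval s l).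
Proof.
rewrite /hash_count /hit_count -sum1_count.
rewrite (_ : iota 0 m = index_iota 0 m) ?big_mkord; last by rewrite /index_iota subn0.
by rewrite big_mkcond; apply: eq_bigr => i _; rewrite inE hashfun_ord; case: ifP.
Qed.

Lemma card_cyclic_interval s l : (s < n)%N -> (#|cyclic_interval s l| <= l)%N.
Proof.
move=> lt_s; pose p x := ((x + n - s) %% n < l)%N; pose off x := ((x + n - s) %% n)%N.
have -> : #|cyclic_interval s l| = count p (iota 0 n).
  rewrite -sum1_card -sum1_count (_ : iota 0 n = index_iota 0 n) ?big_mkord.
    by apply: eq_bigl => y; rewrite inE.
  by rewrite /index_iota subn0.
have off_inj : {in filter p (iota 0 n) &, injective off}.
  move=> x y; rewrite !mem_filter !mem_iota !add0n => /and3P[_ _ lt_x] /and3P[_ _ lt_y] Exy.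
  by rewrite -(mod_offsetK n_gt0 lt_s lt_x) -(mod_offsetK n_gt0 lt_s lt_y); congr ((s + _) %% n).
rewrite -size_filter -(size_map off) -(size_iota 0 l).
apply: uniq_leq_size; first by rewrite map_inj_in_uniq // filter_uniq // iota_uniq.
by move=> z /mapP[x]; rewrite mem_filter => /andP[px _] ->; rewrite mem_iota.
Qed.

End HashFunctions.

Local Open Scope ring_scope.

Section Chernoff.
Variables (R : realType) (n m : nat) (S : {set 'I_n}).

Lemma sum_expR_hit_count (th : R) :
  \sum_(f : {ffun 'I_m -> 'I_n}) expR (th * (hit_count f S)%:R) =
  (n%:R + #|S|%:R * (expR th - 1)) ^+ m.
Proof.
under eq_bigr => f _ do
  rewrite natr_sum mulr_sumr (big_morph (@expR R) (@expRD R) (@expR0 R)).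
have -> : \sum_(f : {ffun 'I_m -> 'I_n}) \prod_(i < m) expR (th * (f i \in S)%:R) =
    \prod_(i < m) \sum_(y : 'I_n) expR (th * (y \in S)%:R) by rewrite bigA_distr_bigA.
rewrite prodr_const card_ord; congr (_ ^+ _).
have E y : expR (th * (y \in S)%:R) = 1 + (y \in S)%:R * (expR th - 1).
  by case: (y \in S); rewrite /= ?mulr1 ?mulr0 ?expR0 ?mul0r ?addr0 ?mul1r // addrC subrK.
rewrite (eq_bigr _ (fun y _ => E y)) big_split /= sumr_const card_ord -mulr_suml.
congr (_ + _ * _); rewrite -sum1_card natr_sum [RHS]big_mkcond.
by apply: eq_bigr => i _; case: (i \in S).
Qed.

Lemma chernoff_card (th t : R) : 0 <= th ->
  #|[set f : {ffun 'I_m -> 'I_n} | t <= (hit_count f S)%:R]|%:R * expR (th * t)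
  <= (n%:R + #|S|%:R * (expR th - 1)) ^+ m.
Proof.
move=> th_ge0; rewrite -sum_expR_hit_count mulr_natl -sumr_const.
apply: (@le_trans _ _ (\sum_(f in [set f | t <= (hit_count f S)%:R])
  expR (th * (hit_count f S)%:R))).
  by apply: ler_sum => f; rewrite inE => le_t; rewrite ler_expR ler_wpM2l.
rewrite [X in _ <= X](bigID (fun f => f \in [set f | t <= (hit_count f S)%:R])) /= lerDl.
by apply: sumr_ge0 => f _; exact: expR_ge0.
Qed.

Lemma chernoff_tail (l : nat) (th t : R) : (0 < n)%N -> 0 <= th -> (#|S| <= l)%N ->
  #|[set f : {ffun 'I_m -> 'I_n} | t <= (hit_count f S)%:R]|%:R
  <= (n ^ m)%:R * expR (m%:R / n%:R * l%:R * (expR th - 1) - th * t).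
Proof.
move=> n_gt0 th_ge0 le_Sl.
have e1_ge0 : 0 <= expR th - 1.
  by rewrite subr_ge0; apply: le_trans (expR_ge1Dx th); rewrite lerDl.
have n_gt0' : 0 < n%:R :> R by rewrite ltr0n.
have mgf_le : n%:R + #|S|%:R * (expR th - 1) <= n%:R * expR (l%:R / n%:R * (expR th - 1)).
  apply: (@le_trans _ _ (n%:R + l%:R * (expR th - 1))).
    by rewrite lerD2l ler_wpM2r // ler_nat.
  have -> : n%:R + l%:R * (expR th - 1) = n%:R * (1 + l%:R / n%:R * (expR th - 1)).
    by field; rewrite gt_eqF.
  by rewrite ler_wpM2l ?ler0n // expR_ge1Dx.
have := le_trans (chernoff_card t th_ge0) (lerXn2r m _ _ mgf_le).
rewrite exprMn -expRM_natl -natrX expRD expRN => H.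
have -> : m%:R / n%:R * l%:R * (expR th - 1) = m%:R * (l%:R / n%:R * (expR th - 1)) by ring.
rewrite mulrA ler_pdivlMr ?expR_gt0 //; apply: H.
- by rewrite qualifE /= addr_ge0 ?mulr_ge0.
- by rewrite qualifE /= mulr_ge0 ?expR_ge0.
Qed.

End Chernoff.

Section TailEstimates.
Variable R : realType.

Lemma expR_sub1_le (th : R) : 0 <= th -> th <= 1/2 -> expR th - 1 <= th + 2 * th ^+ 2.
Proof.
move=> th_ge0 th_le.
have e_gt0 : 0 < expR th := expR_gt0 th.
have e_ge1 : 1 <= expR th by apply: le_trans (expR_ge1Dx th); rewrite lerDl.
have inv_ge : 1 - th <= (expR th)^-1.
  by rewrite -expRN; apply: le_trans (expR_ge1Dx (- th)); rewrite addrC.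
have : (1 - th) * expR th <= 1.
  by rewrite -[X in _ <= X](mulVf (lt0r_neq0 e_gt0)); apply: ler_wpM2r => //; exact: ltW.
nra.
Qed.

Lemma chernoff_exponent_le (eps l : R) : 0 <= eps -> eps <= 1 -> 0 <= l ->
  (1 - eps) * l * (expR (eps / 8) - 1) - eps / 8 * ((1 - eps / 2) * l)
  <= - (eps ^+ 2 / 32) * l.
Proof.
move=> eps_ge0 eps_le1 l_ge0.
have e_le : expR (eps / 8) - 1 <= eps / 8 + 2 * (eps / 8) ^+ 2.
  by apply: expR_sub1_le; lra.
have : (1 - eps) * l * (expR (eps / 8) - 1) <= (1 - eps) * l * (eps / 8 + 2 * (eps / 8) ^+ 2).
  by apply: ler_wpM2l => //; apply: mulr_ge0 => //; lra.
move=> /lerD /(_ (lexx (- (eps / 8 * ((1 - eps / 2) * l))))) /le_trans; apply.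
have -> : (1 - eps) * l * (eps / 8 + 2 * (eps / 8) ^+ 2) - eps / 8 * ((1 - eps / 2) * l)
   = - (eps ^+ 2 / 32) * l - eps ^+ 3 / 32 * l by field.
by rewrite lerBlDr lerDl mulr_ge0 // divr_ge0 // exprn_ge0.
Qed.

Lemma sum_expR_geometric_le (x L : R) (n : nat) : 0 < x -> x <= 1 ->
  \sum_(j < n) expR (- x * (j%:R + L)) <= 2 / x * expR (- x * L).
Proof.
move=> x_gt0 x_le1.
set r := expR (- x).
have r_gt0 : 0 < r := expR_gt0 _.
have r_le1 : r * (1 + x) <= 1.
  have E : r * expR x = 1 by rewrite /r -expRD addNr expR0.
  by rewrite -[X in _ <= X]E ler_wpM2l ?expR_ge1Dx // ltW.
have r_le : r <= 1 - x / 2 by nra.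
have E (j : 'I_n) : expR (- x * (j%:R + L)) = r ^+ j * expR (- x * L).
  by rewrite /r -expRM_natl -expRD; congr expR; ring.
rewrite (eq_bigr _ (fun j _ => E j)) -mulr_suml ler_wpM2r ?expR_ge0 //.
set S := \sum_(i < n) r ^+ i.
have S_ge0 : 0 <= S by apply: sumr_ge0 => i _; apply: exprn_ge0; exact: ltW.
have S_le : S * (1 - r) <= 1.
  have -> : S * (1 - r) = 1 - r ^+ n by rewrite /S mulrC -opprB mulNr -subrX1 opprB.
  by rewrite lerBlDr lerDl exprn_ge0 // ltW.
rewrite ler_pdivlMr //; nra.
Qed.

Lemma poly_expR_le (y : R) (c' : nat) : 0 <= y ->
  y ^+ c' * expR (- (y / 64)) <= (64 * (c'.+1)%:R) ^+ c'.
Proof.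
move=> y_ge0.
set K := (c'.+1)%:R : R.
have K_gt0 : 0 < K by rewrite ltr0n.
set w := y / (64 * K).
have w_ge0 : 0 <= w by apply: divr_ge0 => //; apply: mulr_ge0 => //; exact: ltW.
have Ey : y = 64 * K * w by rewrite /w mulrC -mulrA mulVf ?mulr1 // mulf_neq0 // lt0r_neq0.
have Ew : y / 64 = K * w by rewrite Ey; field.
have pow_le : w ^+ c' <= expR (K * w).
  apply: (@le_trans _ _ (expR (c'%:R * w))).
    rewrite expRM_natl; apply: lerXn2r => //; rewrite ?qualifE /= ?expR_ge0 //.
    by apply: le_trans (expR_ge1Dx w); rewrite lerDr.
  by rewrite ler_expR ler_wpM2r // ler_nat.
rewrite Ew {1}Ey exprMn -mulrA; apply: ler_piMr; first by apply: exprn_ge0; lra.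
rewrite -[X in _ <= X](mulfV (lt0r_neq0 (expR_gt0 (K * w)))) expRN.
by apply: ler_wpM2r; first by rewrite invr_ge0 expR_ge0.
Qed.

Lemma inv_le_expR_of_ln_le (eps L c : R) : 0 < eps -> 0 < c ->
  c * eps ^- 2 * ln (eps^-1) <= L -> eps^-1 <= expR (eps ^+ 2 * L / c).
Proof.
move=> eps_gt0 c_gt0 le_L.
have e2_gt0 : 0 < eps ^+ 2 by apply: exprn_gt0.
rewrite -[X in X <= _](@lnK R) ?posrE ?invr_gt0 // ler_expR ler_pdivlMr //.
have -> : ln eps^-1 * c = eps ^+ 2 * (c * eps ^- 2 * ln eps^-1).
  by field; apply: lt0r_neq0.
by rewrite ler_wpM2l // ltW.
Qed.

Lemma inv_pow_le_expR (eps L c : R) (k : nat) : 0 < eps -> 0 <= L -> 0 < c ->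
  64 * k%:R <= c -> c * eps ^- 2 * ln (eps^-1) <= L ->
  eps^-1 ^+ k <= expR (eps ^+ 2 * L / 64).
Proof.
move=> eps_gt0 L_ge0 c_gt0 le_kc le_L.
have le_inv := inv_le_expR_of_ln_le eps_gt0 c_gt0 le_L.
apply: le_trans (lerXn2r k _ _ le_inv) _.
- by rewrite qualifE /= invr_ge0 ltW.
- by rewrite qualifE /= expR_ge0.
rewrite -expRM_natl ler_expR.
have y_ge0 : 0 <= eps ^+ 2 * L by rewrite mulr_ge0 // exprn_ge0 // ltW.
set w := eps ^+ 2 * L / c.
have w_ge0 : 0 <= w by rewrite divr_ge0 // ltW.
have -> : eps ^+ 2 * L / 64 = w * c / 64 by rewrite /w mulfVK ?gt_eqF.
nra.
Qed.

Lemma poly_tail_le (eps L c : R) (c' : nat) : 0 < eps -> 0 <= L ->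
  128 * (c'.+1)%:R <= c -> c * eps ^- 2 * ln (eps^-1) <= L ->
  64 / eps ^+ 2 * expR (- (eps ^+ 2 / 32) * L) * L ^+ c' <= 64 * (64 * (c'.+1)%:R) ^+ c'.
Proof.
move=> eps_gt0 L_ge0 le_c le_L.
have K_gt0 : 0 < (c'.+1)%:R :> R by rewrite ltr0n.
have pow_le : eps^-1 ^+ (2 * c'.+1) <= expR (eps ^+ 2 * L / 64).
  by apply: inv_pow_le_expR le_L; rewrite // ?natrM; lra.
have y_ge0 : 0 <= eps ^+ 2 * L by rewrite mulr_ge0 // exprn_ge0 // ltW.
set y := eps ^+ 2 * L in pow_le y_ge0 *.
have EL : L = y * eps^-1 ^+ 2.
  by rewrite /y exprVn mulrC mulKf // gt_eqF // exprn_gt0.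
have -> : 64 / eps ^+ 2 * expR (- (eps ^+ 2 / 32) * L) * L ^+ c'
    = 64 * y ^+ c' * (eps^-1 ^+ (2 * c'.+1) * expR (- (y / 32))).
  rewrite {2}EL exprMn -exprM mulnS exprD -exprVn.
  have -> : - (eps ^+ 2 / 32) * L = - (y / 32) by rewrite /y; ring.
  ring.
apply: (@le_trans _ _ (64 * y ^+ c' * expR (- (y / 64)))).
  rewrite ler_wpM2l ?mulr_ge0 ?exprn_ge0 //.
  have -> : expR (- (y / 64)) = expR (y / 64) * expR (- (y / 32)).
    by rewrite -expRD; congr expR; field.
  by rewrite ler_wpM2r ?expR_ge0.
by rewrite -mulrA ler_wpM2l ?poly_expR_le.
Qed.

End TailEstimates.

Lemma prob_hashC (R : realType) (n m : nat) (E : (nat -> nat) -> bool) : (0 < n)%N ->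
  prob_hash R n m E = 1 - #|[set f : {ffun 'I_m -> 'I_n} | ~~ E (hashfun f)]|%:R / (n ^ m)%:R.
Proof.
move=> n_gt0; have nm_gt0 : 0 < (n ^ m)%:R :> R by rewrite ltr0n expn_gt0 n_gt0.
set A := [set f : {ffun 'I_m -> 'I_n} | E (hashfun f)].
have -> : [set f : {ffun 'I_m -> 'I_n} | ~~ E (hashfun f)] = ~: A by apply/setP => f; rewrite !inE.
have card_A : #|A|%:R = (n ^ m)%:R - #|~: A|%:R :> R.
  have <- : #|{ffun 'I_m -> 'I_n}| = (n ^ m)%N by rewrite card_ffun !card_ord.
  by rewrite -(cardsC A) natrD addrK.
by rewrite /prob_hash -/A card_A mulrBl divff // gt_eqF.
Qed.

Section FewFreeSlots.
Variables (R : realType) (n m a L : nat).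
Hypotheses (lt_mn : (m < n)%N) (le_aL : (a + L <= n)%N).

Let eps : R := (n - m)%:R / n%:R.
Let n_gt0 : (0 < n)%N := leq_ltn_trans (leq0n m) lt_mn.

Lemma eps_gt0 : 0 < eps.
Proof. by rewrite divr_gt0 // ltr0n // subn_gt0. Qed.

Lemma eps_le1 : eps <= 1.
Proof. by rewrite ler_pdivrMr ?ltr0n // mul1r ler_nat leq_subr. Qed.

Lemma eps_mul_n : eps * n%:R = (n - m)%:R.
Proof. by rewrite mulfVK // gt_eqF // ltr0n. Qed.

Lemma div_m_n : m%:R / n%:R = 1 - eps.
Proof.
rewrite /eps natrB; last exact: ltnW.
by rewrite mulrBl divff ?gt_eqF ?ltr0n // opprB addrC subrK.
Qed.

Definition crowded (j : nat) := [set f : {ffun 'I_m -> 'I_n} |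
  (1 - eps / 2) * (j + L)%:R <= (hit_count f (cyclic_interval n ((a + n - j) %% n) (j + L)))%:R].

Definition few_free := [set f : {ffun 'I_m -> 'I_n} |
  ~~ (1 / 2 * eps * L%:R <= (free_in (olp_build n (hashfun f) m) a L)%:R)].

Lemma few_free_crowded f : f \in few_free -> exists j : 'I_n, f \in crowded j.
Proof.
rewrite inE -ltNge => few.
have hash_lt k (_ : (k < m)%N) : (hashfun f k < n)%N by apply: hashfun_lt.
have occ := occupied_olp_build n_gt0 (ltnW lt_mn) hash_lt.
have dom := hash_dominated_olp_build n_gt0 (ltnW lt_mn) hash_lt.
have [j lt_jn le_run] := olp_run_bound n_gt0 occ dom lt_mn le_aL.
exists (Ordinal lt_jn); rewrite inE /=.
have eps_pos := eps_gt0; have j_ge0 : 0 <= j%:R :> R := ler0n _ _.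
case: (ltnP (j + L) n) => [lt_jL | le_njL].
  move: le_run; rewrite (minn_idPl (ltnW lt_jL)) hash_count_hashfun -(ler_nat R) !natrD.
  nra.
move: le_run; rewrite (minn_idPr le_njL) hash_count_full // -(ler_nat R) natrD => le_n.
have : eps * L%:R <= (n - m)%:R.
  by rewrite -eps_mul_n ler_wpM2l ?(ltW eps_gt0) // ler_nat (leq_trans _ le_aL) ?leq_addl.
have : m%:R < n%:R :> R by rewrite ltr_nat.
rewrite natrB; last exact: ltnW.
lra.
Qed.

Lemma card_crowded_le j :
  #|crowded j|%:R <= (n ^ m)%:R * expR (- (eps ^+ 2 / 32) * (j%:R + L%:R)).
Proof.
have lt_s : ((a + n - j) %% n < n)%N by rewrite ltn_mod.
have eps8_ge0 : 0 <= eps / 8 by rewrite divr_ge0 // (ltW eps_gt0).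
apply: le_trans (chernoff_tail m ((1 - eps / 2) * (j + L)%:R) n_gt0 eps8_ge0
  (card_cyclic_interval n_gt0 (j + L) lt_s)) _.
rewrite ler_wpM2l ?ler0n // ler_expR div_m_n natrD.
by rewrite chernoff_exponent_le ?eps_le1 ?addr_ge0 ?(ltW eps_gt0).
Qed.

Lemma card_few_free_le :
  #|few_free|%:R / (n ^ m)%:R <= 64 / eps ^+ 2 * expR (- (eps ^+ 2 / 32) * L%:R).
Proof.
have x_gt0 : 0 < eps ^+ 2 / 32 by rewrite divr_gt0 // exprn_gt0 ?eps_gt0.
have x_le1 : eps ^+ 2 / 32 <= 1.
  have : eps ^+ 2 <= 1 by rewrite expr_le1 ?eps_le1 ?(ltW eps_gt0).
  lra.
rewrite ler_pdivrMr ?ltr0n ?expn_gt0 ?n_gt0 // mulrC.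
apply: (@le_trans _ _ (\sum_(j < n) #|crowded j|%:R)).
  by rewrite -natr_sum ler_nat; apply: card_le_sum_cover; apply: few_free_crowded.
apply: (@le_trans _ _ (\sum_(j < n)
    (n ^ m)%:R * expR (- (eps ^+ 2 / 32) * (j%:R + L%:R)))).
  by apply: ler_sum => j _; apply: card_crowded_le.
rewrite -mulr_sumr ler_wpM2l ?ler0n //.
have -> : 64 / eps ^+ 2 = 2 / (eps ^+ 2 / 32) by field; rewrite gt_eqF ?eps_gt0.
exact: sum_expR_geometric_le.
Qed.

End FewFreeSlots.

Theorem mainTheorem9 (R : realType) :
  exists delta : R, 0 < delta /\
  forall c' : nat, exists c0 : R, forall c : R, c0 <= c ->
  exists C : R, 0 < C /\
  forall (n m a len : nat), (m < n)%N -> (a + len <= n)%N ->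
    let eps : R := (n - m)%:R / n%:R in
    c * eps ^- 2 * ln (eps^-1) <= len%:R ->
    prob_hash R n m
      (fun h => delta * eps * len%:R <= (free_in (olp_build n h m) a len)%:R)
    >= 1 - C / len%:R ^+ c'.
Proof.
exists (1 / 2); split; first lra.
move=> c'; exists (128 * (c'.+1)%:R) => c le_c.
exists (64 * (64 * (c'.+1)%:R) ^+ c'); split.
  by rewrite mulr_gt0 // exprn_gt0 // mulr_gt0 // ltr0n.
move=> n m a L lt_mn le_aL eps le_L.
rewrite prob_hashC ?(leq_ltn_trans _ lt_mn) // lerD2l lerN2.
have [L0|L_gt0] := posnP L.
  rewrite (_ : #|_| = 0%N); last first.
    by apply/eqP; rewrite cards_eq0; apply/eqP/setP => f; rewrite !inE L0 mulr0 ler0n.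
  by rewrite mul0r divr_ge0 ?exprn_ge0 ?ler0n // mulr_ge0 // exprn_ge0 // mulr_ge0.
apply: le_trans (card_few_free_le R lt_mn le_aL) _.
rewrite ler_pdivlMr ?exprn_gt0 ?ltr0n //.
exact: poly_tail_le (eps_gt0 R lt_mn) (ler0n _ _) le_c le_L.
Qed.
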